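(* Consider problem (P2): $\sup_{u\in\Gamma^{nT}}J(u)$, and problem (P3): $$\max_{u,\rho,\lambda,\mu,\nu,\eta}\ -\lambda\epsilon(\beta)-\frac1N\sum_{e\in\mathcal E,t\in\mathcal T,l\in\mathcal L}\bar f_e\bar\rho_e\eta^{(l)}_e(t)+\frac1N\sum_{l\in\mathcal L}\langle\nu^{(l)},\rho^{(l)}\rangle$$ subject to, for all $l\in\mathcal L=\{1,\dots,N\}$, $e\in\mathcal E$, $t\in\mathcal T$: $\big(\bar f_e+(\bar\rho_e-\bar f_e/\bar u_e)u_e(t)\big)\eta^{(l)}_e(t)-\mu^{(l)}_e(t)\ge0$; $\nu^{(l)}=\mu^{(l)}+\frac1Tu$; $\|\nu^{(l)}\|_\star\le\lambda$; $\eta^{(l)}\ge0$; $u\in\Gamma^{nT}$; and each $\rho^{(l)}\in\mathbb{R}^{nT}$ is the admissible sample trajectory generated under $u$ from the sample $\varpi^{(l)}$ (dynamics and admissibility constraints with $\varpi^{(l)}$ in place of $\varpi$). Then (P2) is equivalent to (P3) in the sense that their optimal objective values coincide and the set of optimizers of (P2) is the projection (onto $u$) of the set of optimizers of (P3). Further, for any feasible point $(u,\rho,\lambda,\mu,\nu,\eta)$ of (P3) with objective value $\hat J(u)$, one has $\mathrm{Prob}^N\big(\mathbb{E}_{\mathbb{P}(u)}[H(u;\rho)]\ge\hat J(u)\big)\ge1-\beta$.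
   Context: Highway model. Fix integers $n\ge1$, $T\ge1$; segments $e\in\mathcal{E}=\{1,\dots,n\}$ (segment $e\ge2$ has preceding segment $e-1$), time slots $t\in\mathcal{T}=\{0,\dots,T-1\}$. For each $e$: constants $h_e>0$, $\bar\rho_e>0$, $\bar f_e>0$, $\bar u_e>0$ with $\bar u_e\bar\rho_e>\bar f_e$; $\tau_e=\bar f_e/(\bar u_e\bar\rho_e-\bar f_e)$; critical density $\rho^c_e(v)=\tau_e\bar\rho_e\bar u_e/(\tau_e\bar u_e+v)$. Finite set $\Gamma\subset(0,\infty)$ of speed limits; $u=(u_e(t))\in\Gamma^{nT}$. Random vector $\varpi=(\omega,\rho(0),r^{in},r^{o})$ ($\omega(t)\ge0$, $\rho(0)\in\mathbb{R}^n_{\ge0}$, $r^{in}_e(t),r^{o}_e(t)\in[0,1)$) with distribution $\mathbb{P}_\varpi$, assumed light-tailed ($\mathbb{E}[\exp(\|\varpi\|^a)]<\infty$ for some $a>1$). Given $u$ and $\varpi$, trajectory $\rho\in\mathbb{R}^{nT}$: $\rho_1(t+1)=\rho_1(t)+h_1(\omega(t)-u_1(t)\rho_1(t))$; for $e\ge2$, $\rho_e(t+1)=\rho_e(t)+h_e\kappa_e(t)u_{e-1}(t)\rho_{e-1}(t)-h_eu_e(t)\rho_e(t)$, $\kappa_e(t)=\frac{1-r^{o}_{e-1}(t)}{1-r^{in}_e(t)}$, with admissibility $\kappa_e(t)u_{e-1}(t)\rho_{e-1}(t)\le\min\{\bar f_e,\tau_e\bar u_e(\bar\rho_e-\rho_e(t))\}$.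 $\mathbb{P}(u)$ is the law of $\rho$ under $\varpi\sim\mathbb{P}_\varpi$, supported on $\mathcal{Z}(u)=\{\rho:0\le\rho_e(t)\le\rho^c_e(u_e(t))\}$. $H(u;\rho)=\frac1T\sum_{e,t}\rho_e(t)u_e(t)$. Given $N$ i.i.d. samples $\varpi^{(l)}$, $l\in\mathcal L$, with trajectories $\rho^{(l)}$, $\hat{\mathbb{P}}(u)=\frac1N\sum_l\delta_{\rho^{(l)}}$; $\beta\in(0,1)$ and $\epsilon(\beta)>0$ is a Wasserstein radius such that $\mathrm{Prob}^N(\mathbb{P}(u)\in\mathcal{P}(u))\ge1-\beta$, where $\mathcal{P}(u)=\mathbb{B}_{\epsilon(\beta)}(\hat{\mathbb{P}}(u))\cap\mathcal{M}_{lt}(\mathcal{Z}(u))$ ($\mathbb{B}_\epsilon$ = Wasserstein ball w.r.t. the 1-norm, $\mathcal M_{lt}$ = light-tailed distributions); $J(u)=\inf_{\mathbb{Q}\in\mathcal{P}(u)}\mathbb{E}_{\mathbb{Q}}[H(u;\rho)]$. $\|\cdot\|$ is the 1-norm and $\|\cdot\|_\star$ its dual (the $\infty$-norm). $\mathrm{Prob}^N$ is the product probability over the $N$ samples. *)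

From HB Require Import structures.
From mathcomp Require Import all_boot all_order all_algebra.
From mathcomp Require Import all_classical all_reals all_analysis.
Set Implicit Arguments.
Unset Strict Implicit.
Unset Printing Implicit Defensive.
Import Order.TTheory GRing.Theory Num.Theory.
Import numFieldNormedType.Exports.
Local Open Scope classical_set_scope.
Local Open Scope ring_scope.

(* Vectors in R^{nT}: row e (segment e+1, 0-based) is a T-tuple over time
   slots 0..T-1.  Measurable structure = product (Borel) sigma-algebra. *)
Notation Vec R n T := (n.-tuple (T.-tuple R)).
(* Random inputs varpi = (omega, rho(0), r^in, r^o). *)
Notation Inp R n T := (((T.-tuple R) * (n.-tuple R)) * (Vec R n T * Vec R n T))%type.

(* the segment constants h_e, rhobar_e, fbar_e, ubar_e, indexed by the
   0-based segment number e < n (segment e+1 of the paper) *)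
Record hwy (R : realType) := Hwy {
  hw_h : nat -> R; hw_rhobar : nat -> R; hw_fbar : nat -> R; hw_ubar : nat -> R }.

Section Highway.
Variable R : realType.
Variables n T N : nat.

Definition vat (x : Vec R n T) (e t : nat) : R :=
  nth 0 (nth [::] (map (@tval T R) x) e) t.

Definition w_omega (w : Inp R n T) : T.-tuple R := w.1.1.
Definition w_rho0 (w : Inp R n T) : n.-tuple R := w.1.2.
Definition w_rin (w : Inp R n T) : Vec R n T := w.2.1.
Definition w_ro (w : Inp R n T) : Vec R n T := w.2.2.

Variable hp : hwy R.
Local Notation h := (hw_h hp).
Local Notation rhobar := (hw_rhobar hp).
Local Notation fbar := (hw_fbar hp).
Local Notation ubar := (hw_ubar hp).

Definition tau (e : nat) : R := fbar e / (ubar e * rhobar e - fbar e).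
Definition rhoc (e : nat) (v : R) : R :=
  tau e * rhobar e * ubar e / (tau e * ubar e + v).

(* kappa_e(t) for 0-based e >= 1 *)
Definition kappa (w : Inp R n T) (e t : nat) : R :=
  (1 - vat (w_ro w) e.-1 t) / (1 - vat (w_rin w) e t).

(* state rho(t) as a function of the (0-based) segment *)
Fixpoint st (u : Vec R n T) (w : Inp R n T) (t : nat) : nat -> R :=
  match t with
  | 0 => fun e => nth 0 (w_rho0 w) e
  | t'.+1 => fun e =>
      let p := st u w t' in
      match e with
      | 0 => p 0%N + h 0 * (nth 0 (w_omega w) t' - vat u 0 t' * p 0%N)
      | e'.+1 => p e + h e * kappa w e t' * vat u e' t' * p e'
                 - h e * vat u e t' * p e
      end
  end.

Definition traj (u : Vec R n T) (w : Inp R n T) : Vec R n T :=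
  [tuple [tuple st u w t e | t < T] | e < n].

Definition admissible (u : Vec R n T) (w : Inp R n T) : Prop :=
  forall e t : nat, (0 < e < n)%N -> (t < T)%N ->
    kappa w e t * vat u e.-1 t * vat (traj u w) e.-1 t
    <= Num.min (fbar e) (tau e * ubar e * (rhobar e - vat (traj u w) e t)).

Definition Zset (u : Vec R n T) : set (Vec R n T) :=
  [set rho | forall e t : nat, (e < n)%N -> (t < T)%N ->
             0 <= vat rho e t <= rhoc e (vat u e t)].

Definition inGamma (G : seq R) (u : Vec R n T) : Prop :=
  forall e t : nat, (e < n)%N -> (t < T)%N -> vat u e t \in G.

Definition Hcost (u rho : Vec R n T) : R :=
  T%:R^-1 * \sum_(e < n) \sum_(t < T) vat rho e t * vat u e t.

Definition norm1 (x : Vec R n T) : R :=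
  \sum_(e < n) \sum_(t < T) `|vat x e t|.
Definition dist1 (x y : Vec R n T) : R :=
  \sum_(e < n) \sum_(t < T) `|vat x e t - vat y e t|.
(* dual norm of the 1-norm: the infinity norm *)
Definition normInf (x : Vec R n T) : R :=
  \big[Num.max/0]_(e < n) \big[Num.max/0]_(t < T) `|vat x e t|.
Definition inner (x y : Vec R n T) : R :=
  \sum_(e < n) \sum_(t < T) vat x e t * vat y e t.

Definition normW (w : Inp R n T) : R :=
  \sum_(t < T) `|nth 0 (w_omega w) t| + \sum_(e < n) `|nth 0 (w_rho0 w) e|
  + norm1 (w_rin w) + norm1 (w_ro w).

Definition Wvalid (w : Inp R n T) : Prop :=
  (forall t : nat, (t < T)%N -> 0 <= nth 0 (w_omega w) t) /\
  (forall e : nat, (e < n)%N -> 0 <= nth 0 (w_rho0 w) e) /\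
  (forall e t : nat, (e < n)%N -> (t < T)%N ->
     0 <= vat (w_rin w) e t < 1 /\ 0 <= vat (w_ro w) e t < 1).

Local Open Scope ereal_scope.

Definition coupling (mu nu : set (Vec R n T) -> \bar R)
    (pi : probability (Vec R n T * Vec R n T)%type R) : Prop :=
  forall A, measurable A ->
    pi (fst @^-1` A) = mu A /\ pi (snd @^-1` A) = nu A.

Definition W1 (mu nu : set (Vec R n T) -> \bar R) : \bar R :=
  ereal_inf [set \int[pi]_z (dist1 z.1 z.2)%:E | pi in coupling mu nu].

Definition emp (xs : 'I_N -> Vec R n T) : set (Vec R n T) -> \bar R :=
  fun A => (N%:R^-1 * \sum_(l < N) \1_A (xs l))%:E.

Definition Mlt (Z : set (Vec R n T)) : set (probability (Vec R n T) R) :=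
  [set Q | Q (~` Z) = 0 /\
     exists a : R, (1 < a)%R /\ \int[Q]_x (expR (norm1 x `^ a))%:E < +oo].

Variable eps : R.
Variable G : seq R.

Definition Pset (u : Vec R n T) (ws : 'I_N -> Inp R n T)
   : set (probability (Vec R n T) R) :=
  [set Q : probability (Vec R n T) R | W1 Q (emp (fun l => traj u (ws l))) <= eps%:E] `&` Mlt (Zset u).

Definition J (u : Vec R n T) (ws : 'I_N -> Inp R n T) : \bar R :=
  ereal_inf [set \int[Q]_x (Hcost u x)%:E | Q in Pset u ws].

Definition P2val (ws : 'I_N -> Inp R n T) : \bar R :=
  ereal_sup [set J u ws | u in inGamma G].
Definition P2opt (ws : 'I_N -> Inp R n T) : set (Vec R n T) :=
  [set u | inGamma G u /\ J u ws = P2val ws].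

Record p3pt := P3pt {
  p_u : Vec R n T; p_rho : 'I_N -> Vec R n T; p_lam : R;
  p_mu : 'I_N -> Vec R n T; p_nu : 'I_N -> Vec R n T; p_eta : 'I_N -> Vec R n T }.

Local Close Scope ereal_scope.

Definition P3feasible (ws : 'I_N -> Inp R n T) (x : p3pt) : Prop :=
  [/\ (forall (l : 'I_N) (e t : nat), (e < n)%N -> (t < T)%N ->
        0 <= (fbar e + (rhobar e - fbar e / ubar e) * vat (p_u x) e t)
               * vat (p_eta x l) e t - vat (p_mu x l) e t),
      (forall (l : 'I_N) (e t : nat), (e < n)%N -> (t < T)%N ->
        vat (p_nu x l) e t = vat (p_mu x l) e t + T%:R^-1 * vat (p_u x) e t),
      (forall l : 'I_N, normInf (p_nu x l) <= p_lam x),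
      (forall (l : 'I_N) (e t : nat), (e < n)%N -> (t < T)%N ->
        0 <= vat (p_eta x l) e t) &
      inGamma G (p_u x) /\
      (forall l : 'I_N, p_rho x l = traj (p_u x) (ws l) /\
                        admissible (p_u x) (ws l))].

Definition P3obj (x : p3pt) : R :=
  - p_lam x * eps
  - N%:R^-1 * (\sum_(e < n) \sum_(t < T) \sum_(l < N)
                  fbar e * rhobar e * vat (p_eta x l) e t)
  + N%:R^-1 * \sum_(l < N) inner (p_nu x l) (p_rho x l).

Local Open Scope ereal_scope.

Definition P3val (ws : 'I_N -> Inp R n T) : \bar R :=
  ereal_sup [set (P3obj x)%:E | x in P3feasible ws].
Definition P3opt (ws : 'I_N -> Inp R n T) : set p3pt :=
  [set x | P3feasible ws x /\ (P3obj x)%:E = P3val ws].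

End Highway.

(* "S holds with probability at least 1 - beta" (inner probability) *)
Definition whp (R : realType) (d : measure_display) (O : measurableType d)
  (P : probability O R) (S : set O) (beta : R) : Prop :=
  exists A, [/\ measurable A, A `<=` S & ((1 - beta)%:E <= P A)%E].

Definition mutually_independent (R : realType) (d d' : measure_display)
  (O : measurableType d) (Y : measurableType d') (P : probability O R)
  (N : nat) (X : 'I_N -> O -> Y) : Prop :=
  forall A : 'I_N -> set Y, (forall l, measurable (A l)) ->
    P [set w | forall l, A l (X l w)] = (\prod_(l < N) P (X l @^-1` A l))%E.

Arguments p_u {R n T N}.
Arguments p_rho {R n T N}.
Arguments p_lam {R n T N}.
Arguments p_mu {R n T N}.
Arguments p_nu {R n T N}.
Arguments p_eta {R n T N}.

From HB Require Import structures.
From mathcomp Require Import all_boot all_order all_algebra.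
From mathcomp Require Import all_classical all_reals all_analysis.
From mathcomp Require Import measurable_realfun ring lra.
Set Implicit Arguments.
Unset Strict Implicit.
Unset Printing Implicit Defensive.
Import Order.TTheory GRing.Theory Num.Theory.
Import numFieldNormedType.Exports.
Local Open Scope classical_set_scope.
Local Open Scope ring_scope.

(* On Z(u) the cost H(u; .) is the linear form <u/T, .>, and every
   feasible point of (P3) certifies a lower bound on J(u) (weak duality):
   coordinatewise the constraints of (P3), together with
   rho^c_e(v) (fbar_e + (rhobar_e - fbar_e/ubar_e) v) = fbar_e rhobar_e, bound
   <nu, rho> - sum fbar rhobar eta by <min(lambda, u/T), rho>; the latter is
   lambda-Lipschitz below H(u; .) for the 1-norm, so integrating against a
   near-optimal coupling of Q with the empirical measure gives
   P3obj <= E_Q[H] + lambda (W1 - eps) <= E_Q[H] for every Q in calP(u).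
   The bound is attained (strong duality): a fractional knapsack moves the
   transport budget eps of sample mass to 0, starting with the coordinates of
   largest cost u/T, and lambda is the cost level where the budget runs out;
   the empirical measure of the shifted samples and the point with
   nu = min(lambda, u/T), eta = 0 then have equal values.  So J(u) is the
   maximum of P3obj over feasible points with that u, which yields the
   equivalence of (P2) and (P3); the guarantee follows by applying weak
   duality to Q = P(u) on the event P(u) \in calP(u). *)

Section Empirical.
Context {d : measure_display} {X : measurableType d} {R : realType} {N : nat}.
Variable xs : 'I_N -> X.
Hypothesis N_gt0 : (0 < N)%N.

(* The otherwise unused argument lets the probability instance below depend
   on [0 < N]. *)
Definition empirical (_ : (0 < N)%N) (A : set X) : \bar R :=
  (N%:R^-1 * \sum_(l < N) \1_A (xs l))%:E.

Let xsn (k : nat) : X := nth point [seq xs i | i <- enum 'I_N] k.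

Let xsnE (i : 'I_N) : xsn i = xs i.
Proof. by rewrite /xsn (nth_map i) ?size_enum_ord // nth_ord_enum. Qed.

Let invN_ge0 : 0 <= (N%:R : R)^-1. Proof. by rewrite invr_ge0. Qed.

Lemma empiricalE :
  empirical N_gt0 = mscale (NngNum invN_ge0) (msum (fun k => \d_(xsn k)) N).
Proof.
apply/funext => A; rewrite /empirical /mscale /msum /= EFinM; congr (_ * _)%E.
by rewrite -sumEFin; apply: eq_bigr => i _; rewrite /= diracE xsnE indicE.
Qed.

Let empirical0 : empirical N_gt0 set0 = 0%E.
Proof. by rewrite empiricalE measure0. Qed.

Let empirical_ge0 A : (0 <= empirical N_gt0 A)%E.
Proof. by rewrite empiricalE measure_ge0. Qed.

Let empirical_sigma_additive : semi_sigma_additive (empirical N_gt0).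
Proof. by rewrite empiricalE; exact: measure_semi_sigma_additive. Qed.

HB.instance Definition _ := isMeasure.Build _ _ _ (empirical N_gt0)
  empirical0 empirical_ge0 empirical_sigma_additive.

Let empiricalT : empirical N_gt0 setT = 1%E.
Proof.
rewrite /empirical; under eq_bigr do rewrite indicE in_setT.
by rewrite sumr_const card_ord mulVf // pnatr_eq0 -lt0n.
Qed.

HB.instance Definition _ :=
  Measure_isProbability.Build _ _ _ (empirical N_gt0) empiricalT.

Lemma integral_empirical (f : X -> R) : measurable_fun setT f ->
  (\int[empirical N_gt0]_x (f x)%:E = (N%:R^-1 * \sum_(l < N) f (xs l))%:E)%E.
Proof.
move=> mf; have mfE := (measurable_EFinP setT f).2 mf.
have mfp := measurable_funepos mfE; have mfn := measurable_funeneg mfE.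
have int_dirac (g : X -> \bar R) : measurable_fun setT g -> forall k : 'I_N,
    (\int[\d_(xsn k)]_x g x = g (xs k))%E.
  by move=> mg k; rewrite integral_dirac // diracT mul1e xsnE.
rewrite empiricalE integralE !ge0_integral_mscale // !ge0_integral_measure_sum //.
rewrite !(eq_bigr _ (fun k _ => int_dirac _ mfp k)).
rewrite !(eq_bigr _ (fun k _ => int_dirac _ mfn k)).
under eq_bigr do rewrite funeposE /= -EFin_max.
under [X in (_ - _ * X)%E]eq_bigr do rewrite funenegE /= -EFin_max.
rewrite !sumEFin -!EFinM -EFinB -mulrBr -sumrB; congr (_ * _)%:E.
by apply: eq_bigr => i _; rewrite !maxEle; do 2 case: leP => ?; lra.
Qed.

End Empirical.

Section Coordinates.
Context {R : realType} {n T : nat}.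
Local Notation V := (Vec R n T).

Lemma vatE (x : V) (i : 'I_n) (j : 'I_T) : vat x i j = tnth (tnth x i) j.
Proof.
rewrite /vat (nth_map (tnth x i)) ?size_tuple // -tnth_nth.
by rewrite (tnth_nth 0).
Qed.

Definition vec_of (f : nat -> nat -> R) : V :=
  [tuple [tuple f e t | t < T] | e < n].

Lemma vat_vec_of f (e t : nat) : (e < n)%N -> (t < T)%N ->
  vat (vec_of f) e t = f e t.
Proof.
move=> en tT; rewrite -[e]/(nat_of_ord (Ordinal en)) -[t]/(nat_of_ord (Ordinal tT)).
by rewrite vatE !tnth_mktuple.
Qed.

Lemma measurable_vat (i : 'I_n) (j : 'I_T) :
  measurable_fun setT (fun x : V => vat x i j).
Proof.
rewrite (_ : (fun x : V => vat x i j) = (fun y => tnth y j) \o (fun x : V => tnth x i)).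
  by apply: measurableT_comp; exact: measurable_tnth.
by apply/funext => x; rewrite vatE.
Qed.

Lemma measurable_sum2 d (X : measurableType d) (g : 'I_n -> 'I_T -> X -> R) :
  (forall i j, measurable_fun setT (g i j)) ->
  measurable_fun setT (fun x => \sum_(i < n) \sum_(j < T) g i j x).
Proof.
by move=> mg; apply: measurable_sum => i; apply: measurable_sum => j; exact: mg.
Qed.

Lemma measurable_Hcost (u : V) : measurable_fun setT (Hcost u).
Proof.
apply: measurable_funM; first exact: measurable_cst.
apply: measurable_sum2 => i j; apply: measurable_funM; first exact: measurable_vat.
exact: measurable_cst.
Qed.

Lemma measurable_dist1 : measurable_fun setT (fun z : V * V => dist1 z.1 z.2).
Proof.
apply: measurable_sum2 => i j.
apply: (measurableT_comp (@normr_measurable R setT)); apply: measurable_funB.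
  exact: (measurableT_comp (measurable_vat i j) measurable_fst).
exact: (measurableT_comp (measurable_vat i j) measurable_snd).
Qed.

Lemma measurable_expR_norm1 (a : R) :
  measurable_fun setT (fun x : V => expR (norm1 x `^ a)).
Proof.
apply: (measurableT_comp (@measurable_expR R)).
apply: (measurableT_comp (measurable_powR a)); apply: measurable_sum2 => i j.
exact: (measurableT_comp (@normr_measurable R setT) (measurable_vat i j)).
Qed.

Lemma dist1_ge0 (x y : V) : 0 <= dist1 x y.
Proof. by apply: sumr_ge0 => i _; apply: sumr_ge0 => j _. Qed.

Lemma normInf_ge0 (x : V) : 0 <= normInf x.
Proof.
apply: (big_ind (fun a => 0 <= a)) => // [a b ha _|i _]; first by rewrite le_max ha.
by apply: (big_ind (fun a => 0 <= a)) => // a b ha _; rewrite le_max ha.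
Qed.

Lemma normInf_ge_vat (x : V) (i : 'I_n) (j : 'I_T) : `|vat x i j| <= normInf x.
Proof.
rewrite /normInf (bigD1 i) //= le_max; apply/orP; left.
by rewrite (bigD1 j) //= le_max lexx.
Qed.

Lemma normInf_le (x : V) (b : R) : 0 <= b ->
  (forall (i : 'I_n) (j : 'I_T), `|vat x i j| <= b) -> normInf x <= b.
Proof.
move=> b0 hb; apply: (big_ind (fun a => a <= b)) => // [a c ha hc|i _].
  by rewrite ge_max ha.
by apply: (big_ind (fun a => a <= b)) => // a c ha hc; rewrite ge_max ha.
Qed.

Lemma measurable_Zset (hp : hwy R) (u : V) : measurable (Zset hp u).
Proof.
have -> : Zset hp u = \bigcap_(k in [set: 'I_n * 'I_T])
    ((fun x : V => vat x k.1 k.2) @^-1` `[0, rhoc hp k.1 (vat u k.1 k.2)]).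
  apply/seteqP; split => x /=.
  - by move=> Zx [i j] _ /=; rewrite in_itv /=; exact: Zx.
  - by move=> Zx e t en tT; have := Zx (Ordinal en, Ordinal tT) I; rewrite /= in_itv.
apply: fin_bigcap_measurable; first exact: finite_finset.
move=> [i j] _; rewrite -[X in measurable X]setTI.
by apply: measurable_vat => //; exact: measurable_itv.
Qed.

End Coordinates.

Section Transport.
Context {R : realType} {n T : nat}.
Local Notation V := (Vec R n T).

Definition lin_pos (c : nat -> nat -> R) (x : V) : R :=
  \sum_(i < n) \sum_(j < T) c i j * Num.max (vat x i j) 0.

Lemma lin_pos_ge0 (c : nat -> nat -> R) (x : V) :
  (forall (i : 'I_n) (j : 'I_T), 0 <= c i j) -> 0 <= lin_pos c x.
Proof.
move=> c0; apply: sumr_ge0 => i _; apply: sumr_ge0 => j _.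
by apply: mulr_ge0 => //; rewrite le_max lexx orbT.
Qed.

Lemma measurable_lin_pos c : measurable_fun setT (lin_pos c).
Proof.
apply: measurable_sum2 => i j; apply: measurable_funM; first exact: measurable_cst.
by apply: measurable_maxr; [exact: measurable_vat | exact: measurable_cst].
Qed.

Lemma min_mul_pos_le (lam v x y : R) : 0 <= lam -> 0 <= v ->
  Num.min lam v * Num.max y 0 <= v * Num.max x 0 + lam * `|x - y|.
Proof.
move=> lam0 v0; rewrite !maxEle minEle.
have [xy|xy] := lerP 0 (x - y); [rewrite (ger0_norm xy) | rewrite (ltr0_norm xy)];
  by case: ifPn => h1; case: ifPn => h2; case: ifPn => h3;
     rewrite ?ltNge in h1 h2 h3; nra.
Qed.

Lemma lin_pos_min_le (lam : R) (c : nat -> nat -> R) (x y : V) : 0 <= lam ->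
  (forall (i : 'I_n) (j : 'I_T), 0 <= c i j) ->
  lin_pos (fun i j => Num.min lam (c i j)) y <= lin_pos c x + lam * dist1 x y.
Proof.
move=> lam0 c0; rewrite /lin_pos /dist1 mulr_sumr -big_split /=.
apply: ler_sum => i _; rewrite mulr_sumr -big_split /=.
by apply: ler_sum => j _; exact: min_mul_pos_le.
Qed.

Local Open Scope ereal_scope.

Section Coupling.
Context {mu nu : probability V R}.
Context { pi : probability (V * V)%type R }.
Hypothesis pi_coupling : coupling mu nu pi.

Lemma coupling_integral_fst (f : V -> R) :
  measurable_fun setT f -> (forall x, 0 <= f x)%R ->
  \int[pi]_z (f z.1)%:E = \int[mu]_x (f x)%:E.
Proof.
move=> mf f0; have f0E z : 0 <= (f z)%:E by rewrite lee_fin.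
have := ge0_integral_pushforward measurable_fst pi measurableT
  ((measurable_EFinP setT f).2 mf) (fun z _ => f0E z).
rewrite preimage_setT => <-; apply: eq_measure_integral => A mA _.
exact: (pi_coupling mA).1.
Qed.

Lemma coupling_integral_snd (f : V -> R) :
  measurable_fun setT f -> (forall x, 0 <= f x)%R ->
  \int[pi]_z (f z.2)%:E = \int[nu]_x (f x)%:E.
Proof.
move=> mf f0; have f0E z : 0 <= (f z)%:E by rewrite lee_fin.
have := ge0_integral_pushforward measurable_snd pi measurableT
  ((measurable_EFinP setT f).2 mf) (fun z _ => f0E z).
rewrite preimage_setT => <-; apply: eq_measure_integral => A mA _.
exact: (pi_coupling mA).2.
Qed.

Lemma coupling_transport_le (f g : V -> R) (lam : R) : (0 <= lam)%R ->
  measurable_fun setT f -> measurable_fun setT g ->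
  (forall x, 0 <= f x)%R -> (forall y, 0 <= g y)%R ->
  (forall x y, g y <= f x + lam * dist1 x y)%R ->
  \int[nu]_y (g y)%:E
    <= \int[mu]_x (f x)%:E + lam%:E * \int[pi]_z (dist1 z.1 z.2)%:E.
Proof.
move=> lam0 mf mg f0 g0 gf.
have d0 (z : V * V) : (0 <= dist1 z.1 z.2)%R by exact: dist1_ge0.
have mf1 := (measurable_EFinP setT (fun z : V * V => f z.1)).2
  (measurableT_comp mf measurable_fst).
have mld := (measurable_EFinP setT (fun z : V * V => lam * dist1 z.1 z.2)%R).2
  (measurable_funM (measurable_cst lam) (@measurable_dist1 R n T)).
rewrite -coupling_integral_fst // -coupling_integral_snd //.
apply: (@le_trans _ _ (\int[pi]_z ((f z.1)%:E + (lam * dist1 z.1 z.2)%:E))).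
  apply: ge0_le_integral => //.
  - by move=> z _; rewrite lee_fin.
  - exact: (measurable_EFinP setT (fun z : V * V => g z.2)).2
      (measurableT_comp mg measurable_snd).
  - exact: emeasurable_funD.
  - by move=> z _; rewrite -EFinD lee_fin.
rewrite ge0_integralD // => [|z _|z _]; rewrite ?lee_fin ?mulr_ge0 //.
apply: leeD2l; under eq_integral do rewrite EFinM.
rewrite ge0_integralZl // => [|z _]; last by rewrite lee_fin.
exact: (measurable_EFinP setT _).2 (@measurable_dist1 R n T).
Qed.

End Coupling.

Lemma W1_transport_le (mu nu : probability V R) (f g : V -> R) (lam eps : R) :
  (0 <= lam)%R -> measurable_fun setT f -> measurable_fun setT g ->
  (forall x, 0 <= f x)%R -> (forall y, 0 <= g y)%R ->
  (forall x y, g y <= f x + lam * dist1 x y)%R ->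
  W1 mu nu <= eps%:E ->
  \int[nu]_y (g y)%:E <= \int[mu]_x (f x)%:E + (lam * eps)%:E.
Proof.
move=> lam0 mf mg f0 g0 gf W1le; apply/lee_addgt0Pr => dl dl0.
have lam1 : (0 < lam + 1)%R by lra.
have dl'0 : (0 < dl / (lam + 1))%R by rewrite divr_gt0.
have : W1 mu nu < (eps + dl / (lam + 1))%:E.
  by apply: le_lt_trans W1le _; rewrite lte_fin ltrDl.
move/ereal_inf_lt => [_ [pi pi_coupling <-] pi_lt].
apply: le_trans (coupling_transport_le pi_coupling lam0 mf mg f0 g0 gf) _.
rewrite -[X in _ <= X]addeA; apply: leeD2l; rewrite -EFinD.
apply: le_trans (lee_wpmul2l _ (ltW pi_lt)) _; first by rewrite lee_fin.
rewrite -EFinM lee_fin mulrDr lerD2l mulrA ler_pdivrMr //; nra.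
Qed.

End Transport.

Section WeakDuality.
Variables (R : realType) (n T N : nat) (hp : hwy R).
Local Notation V := (Vec R n T).
Local Notation rhobar := (hw_rhobar hp).
Local Notation fbar := (hw_fbar hp).
Local Notation ubar := (hw_ubar hp).

Lemma dual_coord_le (nu mu eta rho lam v c rc : R) :
  0 <= c * eta - mu -> nu = mu + v -> `|nu| <= lam -> 0 <= eta ->
  0 <= rho -> rho <= rc -> 0 < c ->
  nu * rho - rc * c * eta <= Num.min lam v * Num.max rho 0.
Proof.
move=> eta_mu nuE nu_lam eta0 rho0 rho_rc c0.
have nu_le : nu <= lam by apply: le_trans nu_lam; exact: ler_norm.
have ce0 : 0 <= c * eta by apply: mulr_ge0 => //; exact: ltW.
have rc0 : 0 <= rc by exact: le_trans rho_rc.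
have p1 : 0 <= (rc - rho) * (c * eta) by apply: mulr_ge0 => //; rewrite subr_ge0.
have p2 : 0 <= rho * (c * eta - mu) by apply: mulr_ge0.
have p3 : 0 <= rc * (c * eta) by apply: mulr_ge0.
have p4 : 0 <= (lam - nu) * rho by apply: mulr_ge0 => //; rewrite subr_ge0.
rewrite max_l // minEle; case: ifPn => [_|]; first nra.
by rewrite -ltNge => ?; nra.
Qed.

Hypothesis hp_ok : forall e : nat, (e < n)%N ->
  [/\ 0 < hw_h hp e, 0 < rhobar e, 0 < fbar e, 0 < ubar e & fbar e < ubar e * rhobar e].

(* The coefficient of [eta] in the constraints of (P3) is [fbar rhobar / rhoc]. *)
Lemma rhoc_mul_coef (e : 'I_n) (v : R) : 0 < v ->
  0 < fbar e + (rhobar e - fbar e / ubar e) * v /\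
  rhoc hp e v * (fbar e + (rhobar e - fbar e / ubar e) * v) = fbar e * rhobar e.
Proof.
move=> v0; have [_ r0 f0 ub0 fr] := hp_ok (ltn_ord e).
have D0 : 0 < ubar e * rhobar e - fbar e by rewrite subr_gt0.
have t0 : 0 < tau hp e by rewrite divr_gt0.
have -> : rhobar e - fbar e / ubar e = (ubar e * rhobar e - fbar e) / ubar e.
  by field; exact: lt0r_neq0.
split; first by rewrite addr_gt0 // mulr_gt0 // divr_gt0.
have q0 : 0 < tau hp e * ubar e + v by rewrite addr_gt0 // mulr_gt0.
rewrite /rhoc /tau; field.
by rewrite !lt0r_neq0 //; apply: addr_gt0 => //; apply: mulr_gt0.
Qed.

Definition hcoef (u : V) (e t : nat) : R := T%:R^-1 * vat u e t.

Variable u : V.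
Hypothesis u_pos : forall (i : 'I_n) (j : 'I_T), 0 < vat u i j.

Lemma hcoef_ge0 (i : 'I_n) (j : 'I_T) : 0 <= hcoef u i j.
Proof. by rewrite mulr_ge0 ?invr_ge0 // ltW. Qed.

Lemma Hcost_lin_pos (z : V) :
  (forall (i : 'I_n) (j : 'I_T), 0 <= vat z i j) -> Hcost u z = lin_pos (hcoef u) z.
Proof.
move=> z0; rewrite /Hcost /lin_pos mulr_sumr; apply: eq_bigr => i _.
by rewrite mulr_sumr; apply: eq_bigr => j _; rewrite max_l // /hcoef; ring.
Qed.

Local Open Scope ereal_scope.

Lemma integral_Hcost (Q : probability V R) : Q (~` Zset hp u) = 0 ->
  \int[Q]_z (Hcost u z)%:E = \int[Q]_z (lin_pos (hcoef u) z)%:E.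
Proof.
move=> QZ0; apply: ae_eq_integral => //.
- exact: (measurable_EFinP setT (Hcost u)).2 (measurable_Hcost u).
- exact: (measurable_EFinP setT _).2 (measurable_lin_pos _).
exists (~` Zset hp u); split => //; first by apply: measurableC; exact: measurable_Zset.
move=> z /= notE Zz; apply: notE => _; congr EFin; apply: Hcost_lin_pos => i j.
by have /andP[] := Zz i j (ltn_ord i) (ltn_ord j).
Qed.

Local Close Scope ereal_scope.

Variables (G : seq R) (eps : R) (ws : 'I_N -> Inp R n T) (x : p3pt R n T N).
Hypothesis N_gt0 : (0 < N)%N.
Hypothesis samples_in_Z : forall l, Zset hp u (traj hp u (ws l)).
Hypothesis x_feasible : P3feasible hp G ws x.
Hypothesis x_u : p_u x = u.

Lemma P3_lam_ge0 : 0 <= p_lam x.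
Proof.
have [_ _ nu_lam _ _] := x_feasible.
exact: le_trans (normInf_ge0 _) (nu_lam (Ordinal N_gt0)).
Qed.

Lemma P3obj_le_lin_pos :
  P3obj hp eps x + p_lam x * eps <=
  N%:R^-1 * \sum_(l < N)
    lin_pos (fun i j => Num.min (p_lam x) (hcoef u i j)) (traj hp u (ws l)).
Proof.
have [eta_mu nuE nu_lam eta0 [_ x_traj]] := x_feasible.
rewrite /P3obj.
set F := fun (l : 'I_N) (e : 'I_n) (t : 'I_T) =>
  fbar e * rhobar e * vat (p_eta x l) e t.
have -> : \sum_(e < n) \sum_(t < T) \sum_(l < N) fbar e * rhobar e * vat (p_eta x l) e t
    = \sum_(l < N) \sum_(e < n) \sum_(t < T) F l e t.
  rewrite (eq_bigr (fun e : 'I_n => \sum_(l < N) \sum_(t < T) F l e t)).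
    by rewrite exchange_big.
  by move=> e _; rewrite exchange_big.
have -> : forall a b c : R, - a * eps - N%:R^-1 * b + N%:R^-1 * c + a * eps
    = N%:R^-1 * (c - b) by move=> a b c; ring.
rewrite ler_wpM2l ?invr_ge0 // -sumrB; apply: ler_sum => l _.
rewrite /inner /lin_pos -sumrB; apply: ler_sum => e _.
rewrite -sumrB; apply: ler_sum => t _.
have [coef_gt0 rhoc_coef] := rhoc_mul_coef e (u_pos e t).
have /andP[rho0 rho_rhoc] := samples_in_Z l (ltn_ord e) (ltn_ord t).
rewrite (proj1 (x_traj l)) x_u /F -rhoc_coef.
apply: (dual_coord_le (mu := vat (p_mu x l) e t)) rho0 rho_rhoc coef_gt0.
- by rewrite -x_u; exact: eta_mu.
- by rewrite (nuE l e t (ltn_ord e) (ltn_ord t)) x_u.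
- exact: le_trans (normInf_ge_vat _ _ _) (nu_lam l).
- exact: eta0.
Qed.

Local Open Scope ereal_scope.

Lemma weak_duality (Q : probability V R) :
  Pset hp eps u ws Q -> (P3obj hp eps x)%:E <= \int[Q]_z (Hcost u z)%:E.
Proof.
move=> [W1le [QZ0 _]].
have lam0 := P3_lam_ge0.
have c0 := hcoef_ge0.
have cmin0 (i : 'I_n) (j : 'I_T) : (0 <= Num.min (p_lam x) (hcoef u i j))%R.
  by rewrite le_min lam0 c0.
have := W1_transport_le (mu := Q) (nu := empirical (fun l => traj hp u (ws l)) N_gt0)
  lam0 (measurable_lin_pos _) (measurable_lin_pos _) (fun z => lin_pos_ge0 z c0)
  (fun z => lin_pos_ge0 z cmin0) (fun z y => lin_pos_min_le z y lam0 c0) W1le.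
rewrite integral_empirical; last exact: measurable_lin_pos.
rewrite -integral_Hcost // => le_obj.
rewrite -(@leeD2rE _ (p_lam x * eps)%:E) // -EFinD.
apply: le_trans le_obj; rewrite lee_fin; exact: P3obj_le_lin_pos.
Qed.

End WeakDuality.

Definition knap_weight {R : realType} (lam th v : R) : R :=
  ((lam < v)%R : nat)%:R + th * ((v == lam)%R : nat)%:R.

Lemma knap_weight01 {R : realType} (lam th v : R) :
  0 <= th <= 1 -> 0 <= knap_weight lam th v <= 1.
Proof.
move=> /andP[th0 th1]; rewrite /knap_weight.
by case: ltgtP => _ /=; rewrite ?eqxx /=; apply/andP; split; lra.
Qed.

Lemma knap_weight_shift {R : realType} (lam th v rho : R) :
  v * (rho * (1 - knap_weight lam th v))
    = Num.min lam v * rho - lam * (rho * knap_weight lam th v).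
Proof.
rewrite /knap_weight minEle; case: ltgtP => h /=; rewrite ?eqxx /=; try ring.
by rewrite h; ring.
Qed.

Section FractionalKnapsack.
Variables (R : realType) (K : finType) (v rho : K -> R) (eps : R).
Hypotheses (v_gt0 : forall k, 0 < v k) (rho_ge0 : forall k, 0 <= rho k).
Hypothesis eps_gt0 : 0 < eps.

Let mass_ge (c : R) := \sum_k rho k * ((c <= v k)%R : nat)%:R.
Let mass_gt (c : R) := \sum_k rho k * ((c < v k)%R : nat)%:R.
Let mass_eq (c : R) := \sum_k rho k * ((v k == c)%R : nat)%:R.

Let mass_geE c : mass_ge c = mass_gt c + mass_eq c.
Proof.
rewrite -big_split /=; apply: eq_bigr => k _; rewrite -mulrDr.
by case: ltgtP => _ //=; rewrite ?eqxx ?addr0 ?add0r.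
Qed.

Let mass_eq_ge0 c : 0 <= mass_eq c.
Proof. by apply: sumr_ge0 => k _; rewrite mulr_ge0. Qed.

Let mass_knap_weight lam th :
  \sum_k rho k * knap_weight lam th (v k) = mass_gt lam + th * mass_eq lam.
Proof.
rewrite mulr_sumr -big_split /=; apply: eq_bigr => k _.
by rewrite mulrDr mulrCA.
Qed.

Let level := \big[Num.max/0]_(k | eps <= mass_ge (v k)) v k.

Let level_ge0 : 0 <= level.
Proof.
apply: (big_ind (fun a => 0 <= a)) => // [a b a0 _|k _]; first by rewrite le_max a0.
exact: ltW.
Qed.

Let level_ub k : eps <= mass_ge (v k) -> v k <= level.
Proof. by move=> Pk; rewrite /level (bigD1 k) //= le_max lexx. Qed.

Let mass_ge_level : 0 < level -> eps <= mass_ge level.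
Proof.
have : level = 0 \/ eps <= mass_ge level.
  apply: (big_ind (fun a => a = 0 \/ eps <= mass_ge a)) => [|a b ha hb|k].
  - by left.
  - by rewrite maxEle; case: ifP.
  - by right.
by case=> [->|//]; rewrite ltxx.
Qed.

Let mass_gt_level : mass_gt level <= eps.
Proof.
rewrite leNgt; apply/negP => eps_lt.
have [k1 lt_k1] : exists k, level < v k.
  apply/not_existsP => none; move: eps_lt; rewrite /mass_gt big1 ?ltNge ?ltW //.
  by move=> k _; case: ltP => [lt_k|_]; [case: (none k) | rewrite mulr0].
have [k0 lt_k0 k0_min] := arg_minP v (P := fun k => level < v k) lt_k1.
suff : eps <= mass_ge (v k0) by move/level_ub; rewrite leNgt lt_k0.
suff -> : mass_ge (v k0) = mass_gt level by exact: ltW.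
apply: eq_bigr => k _; congr (_ * _%:R).
case: (ltP level (v k)) => [lt_k|ge_k]; first by rewrite k0_min.
by rewrite leNgt (le_lt_trans ge_k lt_k0).
Qed.

Lemma fractional_knapsack : exists lam th : R,
  [/\ 0 <= lam, 0 <= th <= 1,
      \sum_k rho k * knap_weight lam th (v k) <= eps &
      lam * \sum_k rho k * knap_weight lam th (v k) = lam * eps].
Proof.
have [/andP[level0 eq0]|not_both] := boolP ((0 < level) && (0 < mass_eq level)).
  have := mass_ge_level level0; rewrite mass_geE => eps_le.
  exists level, ((eps - mass_gt level) / mass_eq level).
  rewrite mass_knap_weight divfK ?lt0r_neq0 //.
  split; [exact: level_ge0 | | by rewrite addrC subrK | by congr (_ * _); ring].
  rewrite divr_ge0 ?subr_ge0 ?mass_gt_level ?mass_eq_ge0 //=.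
  by rewrite ler_pdivrMr // mul1r lerBlDl.
exists level, 0; rewrite mass_knap_weight mul0r addr0 lexx ler01.
split => //; have [level0|] := ltP 0 level; last first.
  move=> level_le0; have -> : level = 0 by apply/le_anti; rewrite level_le0 level_ge0.
  by rewrite !mul0r.
move: not_both; rewrite level0 /= -leNgt => eq_le0.
have eq0 : mass_eq level = 0 by apply/le_anti; rewrite eq_le0 mass_eq_ge0.
have := mass_ge_level level0; rewrite mass_geE eq0 addr0 => ge_eps.
by congr (_ * _); apply/le_anti; rewrite mass_gt_level.
Qed.

End FractionalKnapsack.

Section StrongDuality.
Variables (R : realType) (n T N : nat) (hp : hwy R) (G : seq R) (eps : R).
Variables (ws : 'I_N -> Inp R n T) (u : Vec R n T).
Local Notation V := (Vec R n T).
Hypothesis N_gt0 : (0 < N)%N.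
Hypothesis u_Gamma : inGamma G u.
Hypothesis samples_ok :
  forall l, Zset hp u (traj hp u (ws l)) /\ admissible hp u (ws l).
Hypothesis u_pos : forall (i : 'I_n) (j : 'I_T), 0 < vat u i j.

Let rho (l : 'I_N) (e t : nat) : R := vat (traj hp u (ws l)) e t.

Let rho_ge0 l (i : 'I_n) (j : 'I_T) : 0 <= rho l i j.
Proof. by have /andP[] := (samples_ok l).1 i j (ltn_ord i) (ltn_ord j). Qed.

Section KnapsackCertificate.
Variables lam th : R.
Hypotheses (lam_ge0 : 0 <= lam) (th01 : 0 <= th <= 1).

Let w (e t : nat) : R := knap_weight lam th (hcoef u e t).

Let moved := \sum_(l < N) \sum_(e < n) \sum_(t < T) rho l e t * w e t.
Hypothesis moved_le : N%:R^-1 * moved <= eps.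
Hypothesis moved_slack : lam * (N%:R^-1 * moved) = lam * eps.

Let shifted (l : 'I_N) : V := vec_of (fun e t => rho l e t * (1 - w e t)).

Let shifted_in_Z l : Zset hp u (shifted l).
Proof.
move=> e t en tT; rewrite vat_vec_of //.
have /andP[r0 r1] := (samples_ok l).1 e t en tT.
have /andP[w0 w1] := knap_weight01 lam (hcoef u e t) th01.
rewrite mulr_ge0 ?subr_ge0 //=; apply: le_trans r1.
by rewrite ler_piMr // lerBlDr lerDl.
Qed.

Let nu_star : V := vec_of (fun e t => Num.min lam (hcoef u e t)).
Let mu_star : V := vec_of (fun e t => Num.min lam (hcoef u e t) - hcoef u e t).
Let eta_star : V := vec_of (fun _ _ => 0).

Let x_star : p3pt R n T N :=
  P3pt u (fun l => traj hp u (ws l)) lam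
    (fun=> mu_star) (fun=> nu_star) (fun=> eta_star).

Let Q_star : probability V R := empirical shifted N_gt0.

Let x_star_feasible : P3feasible hp G ws x_star.
Proof.
split => /=.
- move=> l e t en tT; rewrite !vat_vec_of // mulr0 sub0r opprB subr_ge0.
  by rewrite ge_min lexx orbT.
- by move=> l e t en tT; rewrite !vat_vec_of // subrK.
- move=> l; apply: normInf_le => // i j; rewrite vat_vec_of // ger0_norm.
    by rewrite ge_min lexx.
  by rewrite le_min lam_ge0 hcoef_ge0.
- by move=> l e t en tT; rewrite vat_vec_of.
- by split => // l; split => //; exact: (samples_ok l).2.
Qed.

Let Q_star_in_Pset : Pset hp eps u ws Q_star.
Proof.
split; last split.
- pose pi : probability (V * V)%type R :=
    empirical (fun l => (shifted l, traj hp u (ws l))) N_gt0.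
  apply: le_trans (ereal_inf_lbound _) _; first by exists pi.
  rewrite integral_empirical ?lee_fin; last exact: measurable_dist1.
  apply: le_trans moved_le; rewrite le_eqVlt; apply/orP; left; apply/eqP.
  congr (_ * _); apply: eq_bigr => l _; apply: eq_bigr => e _.
  apply: eq_bigr => t _; rewrite vat_vec_of //= /rho.
  set r := vat _ e t; have -> : r * (1 - w e t) - r = - (r * w e t) by ring.
  have /andP[w0 _] := knap_weight01 lam (hcoef u e t) th01.
  by rewrite normrN ger0_norm //; apply: mulr_ge0 (rho_ge0 l e t) w0.
- change (((N%:R : R)^-1 * \sum_(l < N) \1_(~` Zset hp u) (shifted l))%:E = 0%E).
  rewrite big1 ?mulr0 // => l _.
  by rewrite indicE memNset // => /(_ (shifted_in_Z l)).
- exists 2; split; first lra.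
  by rewrite integral_empirical ?ltry //; exact: measurable_expR_norm1.
Qed.

Let integral_Q_star :
  (\int[Q_star]_z (Hcost u z)%:E)%E = (P3obj hp eps x_star)%:E.
Proof.
rewrite integral_empirical; last exact: measurable_Hcost.
congr EFin; rewrite /P3obj /=.
pose S := \sum_(l < N) \sum_(e < n) \sum_(t < T) Num.min lam (hcoef u e t) * rho l e t.
have -> : \sum_(e < n) \sum_(t < T) \sum_(l < N)
    hw_fbar hp e * hw_rhobar hp e * vat eta_star e t = 0.
  by do 3!(apply: big1 => ? _); rewrite vat_vec_of // mulr0.
have -> : \sum_(l < N) inner nu_star (traj hp u (ws l)) = S.
  by do 3!(apply: eq_bigr => ? _); rewrite vat_vec_of.
have -> : \sum_(l < N) Hcost u (shifted l) = S - lam * moved.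
  rewrite /moved /S [lam * _]mulr_sumr -sumrB; apply: eq_bigr => l _.
  rewrite /Hcost [lam * _]mulr_sumr mulr_sumr -sumrB; apply: eq_bigr => e _.
  rewrite [lam * _]mulr_sumr mulr_sumr -sumrB; apply: eq_bigr => t _.
  by rewrite vat_vec_of // -knap_weight_shift /w /hcoef; ring.
by rewrite mulNr -moved_slack; ring.
Qed.

Lemma knapsack_certificate :
  exists2 x : p3pt R n T N, P3feasible hp G ws x /\ p_u x = u &
    exists2 Q : probability V R, Pset hp eps u ws Q &
      (\int[Q]_z (Hcost u z)%:E)%E = (P3obj hp eps x)%:E.
Proof.
exists x_star; first by split; [exact: x_star_feasible | ].
by exists Q_star; [exact: Q_star_in_Pset | exact: integral_Q_star].
Qed.

End KnapsackCertificate.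

Hypotheses (T_gt0 : (0 < T)%N) (eps_gt0 : 0 < eps).

Lemma strong_duality :
  exists2 x : p3pt R n T N, P3feasible hp G ws x /\ p_u x = u &
    exists2 Q : probability V R, Pset hp eps u ws Q &
      (\int[Q]_z (Hcost u z)%:E)%E = (P3obj hp eps x)%:E.
Proof.
have v_gt0 (k : 'I_N * ('I_n * 'I_T)) : 0 < hcoef u k.2.1 k.2.2.
  by rewrite mulr_gt0 ?invr_gt0 ?ltr0n.
have mass_ge0 (k : 'I_N * ('I_n * 'I_T)) : 0 <= N%:R^-1 * rho k.1 k.2.1 k.2.2.
  by rewrite mulr_ge0 ?invr_ge0.
have [lam [th [lam0 th01 moved_le moved_slack]]] :=
  fractional_knapsack v_gt0 mass_ge0 eps_gt0.
have movedE : \sum_(k : 'I_N * ('I_n * 'I_T))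
      N%:R^-1 * rho k.1 k.2.1 k.2.2 * knap_weight lam th (hcoef u k.2.1 k.2.2)
    = N%:R^-1 * \sum_(l < N) \sum_(e < n) \sum_(t < T)
        rho l e t * knap_weight lam th (hcoef u e t).
  rewrite mulr_sumr; under [RHS]eq_bigr do rewrite pair_bigA mulr_sumr.
  by rewrite pair_bigA; apply: eq_bigr => k _; rewrite mulrA.
rewrite movedE in moved_le moved_slack.
exact: knapsack_certificate moved_le moved_slack.
Qed.

End StrongDuality.

Section Equivalence.
Variables (R : realType) (n T N : nat) (hp : hwy R) (G : seq R) (eps : R).
Variable ws : 'I_N -> Inp R n T.
Hypotheses (T_gt0 : (0 < T)%N) (N_gt0 : (0 < N)%N) (eps_gt0 : 0 < eps).
Hypothesis hp_ok : forall e : nat, (e < n)%N ->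
  [/\ 0 < hw_h hp e, 0 < hw_rhobar hp e, 0 < hw_fbar hp e, 0 < hw_ubar hp e
    & hw_fbar hp e < hw_ubar hp e * hw_rhobar hp e].
Hypothesis G_pos : forall g, g \in G -> 0 < g.
Hypothesis samples_ok : forall l u, inGamma G u ->
  admissible hp u (ws l) /\ Zset hp u (traj hp u (ws l)).

Local Open Scope ereal_scope.

Lemma inGamma_pos (u : Vec R n T) :
  inGamma G u -> forall (i : 'I_n) (j : 'I_T), (0 < vat u i j)%R.
Proof. by move=> uG i j; apply: G_pos; exact: uG. Qed.

Lemma P3feasible_inGamma x : P3feasible hp G ws x -> inGamma G (p_u x).
Proof. by case=> _ _ _ _ []. Qed.

Lemma P3obj_le_J x : P3feasible hp G ws x -> (P3obj hp eps x)%:E <= J hp eps (p_u x) ws.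
Proof.
move=> x_feas; have uG := P3feasible_inGamma x_feas.
apply: le_ereal_inf_tmp => _ [Q PQ <-].
apply: (weak_duality hp_ok (inGamma_pos uG) N_gt0 _ x_feas) PQ => //.
by move=> l; exact: (samples_ok l uG).2.
Qed.

Lemma J_attained u : inGamma G u ->
  exists2 x, P3feasible hp G ws x /\ p_u x = u & J hp eps u ws = (P3obj hp eps x)%:E.
Proof.
move=> uG; have samples_uG l := conj (samples_ok l uG).2 (samples_ok l uG).1.
have [x [x_feas x_u] [Q PQ IQ]] := strong_duality (eps := eps) N_gt0 uG
  samples_uG (inGamma_pos uG) T_gt0 eps_gt0.
exists x => //; apply/le_anti/andP; split.
  by rewrite -IQ; apply: ereal_inf_lbound; exists Q.
by rewrite -x_u; exact: P3obj_le_J.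
Qed.

Lemma P2val_eq_P3val : P2val hp eps G ws = P3val hp eps G ws.
Proof.
apply/le_anti/andP; split.
  apply: ge_ereal_sup => _ [u uG <-].
  have [x [x_feas _] ->] := J_attained uG.
  by apply: ereal_sup_ubound; exists x.
apply: ge_ereal_sup => _ [x x_feas <-].
apply: le_trans (P3obj_le_J x_feas) _.
by apply: ereal_sup_ubound; exists (p_u x) => //; exact: P3feasible_inGamma.
Qed.

Lemma P2opt_eq_P3opt : P2opt hp eps G ws = p_u @` P3opt hp eps G ws.
Proof.
apply/seteqP; split => [u [uG Ju]|_ [x [x_feas x_opt] <-]].
  have [x [x_feas x_u] Jx] := J_attained uG.
  by exists x => //; split => //; rewrite -Jx Ju P2val_eq_P3val.
have uG := P3feasible_inGamma x_feas.
split => //; apply/le_anti/andP; split.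
  by apply: ereal_sup_ubound; exists (p_u x).
by rewrite P2val_eq_P3val -x_opt; exact: P3obj_le_J.
Qed.

End Equivalence.

Theorem theorem2
  (R : realType) (n T N : nat)
  (hp : hwy R) (G : seq R) (beta eps : R)
  (d : measure_display) (Omega : measurableType d) (P : probability Omega R)
  (Pw : probability (Inp R n T) R)
  (X : 'I_N -> Omega -> Inp R n T)
  (Wadm : set (Inp R n T))
  (Pu : Vec R n T -> probability (Vec R n T) R) :
  (0 < n)%N -> (0 < T)%N -> (0 < N)%N ->
  (forall e : nat, (e < n)%N ->
     [/\ 0 < hw_h hp e, 0 < hw_rhobar hp e, 0 < hw_fbar hp e, 0 < hw_ubar hp e
       & hw_fbar hp e < hw_ubar hp e * hw_rhobar hp e]) ->
  (forall g, g \in G -> 0 < g) ->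
  0 < beta < 1 -> 0 < eps ->
  (* varpi is light-tailed *)
  (exists a : R, 1 < a /\
     (\int[Pw]_w (expR (normW w `^ a))%:E < +oo)%E) ->
  (* the model: P_varpi-a.s. varpi is in range, and for every u the trajectory
     is admissible and lies in Z(u) *)
  measurable Wadm -> Pw Wadm = 1%E ->
  (forall w, Wadm w -> Wvalid w /\
     forall u, inGamma G u ->
       admissible hp u w /\ Zset hp u (traj hp u w)) ->
  (* varpi^(1), ..., varpi^(N) are i.i.d. with law P_varpi *)
  (forall l, measurable_fun [set: Omega] (X l)) ->
  (forall l A, measurable A -> P (X l @^-1` A) = Pw A) ->
  mutually_independent P X ->
  (forall l w, Wadm (X l w)) ->
  (* P(u) is the law of rho = traj(u, varpi) *)
  (forall u, inGamma G u -> forall A, measurable A ->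
     Pu u A = Pw (traj hp u @^-1` A)) ->
  (* eps = epsilon(beta): Prob^N(P(u) in calP(u)) >= 1 - beta *)
  (forall u, inGamma G u ->
     whp P [set w | Pset hp eps u (fun l => X l w) (Pu u)] beta) ->
  (* (P2) <=> (P3), for every realisation of the samples *)
  (forall w : Omega,
     P2val hp eps G (fun l => X l w)
       = P3val hp eps G (fun l => X l w)
     /\ P2opt hp eps G (fun l => X l w)
       = p_u @` P3opt hp eps G (fun l => X l w))
  /\
  (* finite-sample guarantee for any (sample-dependent) feasible point of (P3) *)
  (forall (u : Vec R n T) (sel : Omega -> p3pt R n T N),
     inGamma G u ->
     (forall w, P3feasible hp G (fun l => X l w) (sel w)
                /\ p_u (sel w) = u) ->
     whp P [set w | (P3obj hp eps (sel w))%:E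
                      <= \int[Pu u]_x (Hcost u x)%:E]%E beta).
Proof.
move=> _ T_gt0 N_gt0 hp_ok G_pos _ eps_gt0 _ _ _ W_ok _ _ _ X_ok _ Pu_in_P.
have samples_ok w l u : inGamma G u ->
    admissible hp u (X l w) /\ Zset hp u (traj hp u (X l w)).
  exact: (W_ok _ (X_ok l w)).2.
split=> [w|u sel uG sel_ok].
  split; [exact: P2val_eq_P3val (samples_ok w) | exact: P2opt_eq_P3opt (samples_ok w)].
(* On the event [P(u) \in calP(u)] weak duality applies to [Q := P(u)]; the
   distributional hypotheses matter only through this defining property of [eps]. *)
have [A [mA A_sub pA]] := Pu_in_P u uG.
exists A; split => // w /A_sub Pu_in; have [sel_feas sel_u] := sel_ok w.
apply: (weak_duality hp_ok (inGamma_pos G_pos uG) N_gt0 _ sel_feas sel_u Pu_in).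
by move=> l; exact: (samples_ok w l u uG).2.
Qed.
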